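(* Let $\epsilon \in (0,\exp(-2))$, let $G$ be an abelian group, and let $A \subset G$ be a non-empty finite distributional $\epsilon$-approximate group. Then \[\Delta \mathbb{H}(A) \le 2\epsilon \log (\epsilon^{-1}|A|).\]
   Context: $\log$ is the natural logarithm. For a random variable $X$ with finite range $R$ (the set of values taken with positive probability), its Shannon entropy is $\mathbb{H}(X) = -\sum_{x\in R}\mathbb{P}(X=x)\log \mathbb{P}(X=x)$. For a non-empty finite set $A$, $U_A$ denotes a random variable uniformly distributed on $A$. In expressions such as $U_A+U_A$ the two summands are independent copies. For a non-empty finite subset $A$ of an abelian group, $\Delta\mathbb{H}(A) := \mathbb{H}(U_A+U_A) - \mathbb{H}(U_A)$. Definition: for $\epsilon>0$, an abelian group $G$ and a non-empty finite subset $A$ of $G$, $A$ is a distributional $\epsilon$-approximate group of $G$ if there exists a subset $U \subset G$ with $|U| = |A|$ such that the proportion of pairs $(a,b) \in A \times A$ with $a+b \in U$ is at least $1-\epsilon$. *)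

From HB Require Import structures.
From mathcomp Require Import all_boot all_order all_algebra.
From mathcomp Require Import finmap.
From mathcomp Require Import all_classical all_reals sequences exp.
Set Implicit Arguments. Unset Strict Implicit. Unset Printing Implicit Defensive.
Import Order.TTheory GRing.Theory Num.Theory.
Local Open Scope ring_scope.
Local Open Scope fset_scope.

Definition entropy (R : realType) (G : choiceType) (S : {fset G}) (p : G -> R) : R :=
  - \sum_(x <- S | 0 < p x) p x * ln (p x).

Definition unif_law (R : realType) (G : choiceType) (A : {fset G}) (x : G) : R :=
  if x \in A then (#|` A|%:R)^-1 else 0.

(* law of U_A + U_A (independent copies) *)
Definition sum_law (R : realType) (G : zmodType) (A : {fset G}) (x : G) : R :=
  (\sum_(a <- A) \sum_(b <- A) (a + b == x)%:R) / (#|` A|%:R ^+ 2).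

Definition sumset (G : zmodType) (A : {fset G}) : {fset G} :=
  [fset (a + b)%R | a in A, b in A].

Definition H_UA (R : realType) (G : choiceType) (A : {fset G}) : R :=
  entropy A (@unif_law R G A).

Definition H_UAplusUA (R : realType) (G : zmodType) (A : {fset G}) : R :=
  entropy (sumset A) (@sum_law R G A).

Definition DeltaH (R : realType) (G : zmodType) (A : {fset G}) : R :=
  H_UAplusUA R A - H_UA R A.

Definition distr_approx_group (R : realType) (G : zmodType) (eps : R) (A : {fset G}) : Prop :=
  exists U : {fset G}, #|` U| = #|` A| /\
    1 - eps <= (\sum_(a <- A) \sum_(b <- A) (a + b \in U)%:R) / (#|` A|%:R ^+ 2).

From HB Require Import structures.
From mathcomp Require Import all_boot all_order all_algebra.
From mathcomp Require Import finmap.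
From mathcomp Require Import all_classical all_reals sequences exp.
From mathcomp Require Import ring lra.
Set Implicit Arguments. Unset Strict Implicit. Unset Printing Implicit Defensive.
Import Order.TTheory GRing.Theory Num.Theory.
Local Open Scope fset_scope.
Local Open Scope ring_scope.

(* Gibbs' inequality bounds the entropy of X = U_A + U_A by its cross entropy
   against any positive weight w, up to the defect sum w - 1.  Take w = 1/|A| on
   the set U of the definition and w = eps/|A|^2 elsewhere.  Every atom of X has
   mass at least 1/|A|^2, so the weights off U add up to at most eps, and since
   |U| = |A| the total weight is at most 1 + eps.  The cross entropy is
   log|A| + P(X \notin U) log(|A|/eps) <= log|A| + eps log(|A|/eps), whence
   Delta H(A) <= eps log(|A|/eps) + eps; for eps < e^-2 the last eps is absorbed
   because log(|A|/eps) >= 2. *)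

Lemma neg_mul_ln_le (R : realType) (p w : R) : 0 < p -> 0 < w ->
  - (p * ln p) <= - (p * ln w) + w - p.
Proof.
move=> p_gt0 w_gt0.
have /le_ln1Dx : -1 < w / p - 1 by have := divr_gt0 w_gt0 p_gt0; lra.
rewrite addrC subrK ln_div ?posrE // => /(ler_wpM2l (ltW p_gt0)).
rewrite mulrBr mulrBr mulr1 mulrCA divff ?gt_eqF // mulr1; lra.
Qed.

Lemma gibbs_le (R : realType) (T : eqType) (S : seq T) (p w : T -> R) :
  (forall x, x \in S -> 0 <= p x) -> (forall x, x \in S -> 0 < w x) ->
  - \sum_(x <- S | 0 < p x) p x * ln (p x) <=
  \sum_(x <- S) (- (p x * ln (w x)) + w x - p x).
Proof.
move=> p_ge0 w_gt0; rewrite -sumrN big_mkcond /= !(big_seq_cond xpredT).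
apply: ler_sum => x /andP[xS _]; case: ifPn => [px_gt0|].
  exact: neg_mul_ln_le (w_gt0 x xS).
rewrite -leNgt => px_le0; have -> : p x = 0 by apply/eqP; rewrite eq_le px_le0 p_ge0.
by rewrite mul0r oppr0 add0r addr0 ltW // w_gt0.
Qed.

Lemma sum_mem_le_card (R : numDomainType) (T : choiceType) (S U : {fset T}) :
  \sum_(x <- S) (x \in U)%:R <= #|` U|%:R :> R.
Proof.
rewrite -(natr_sum _ _ xpredT (fun x => nat_of_bool (x \in U))) ler_nat.
rewrite -big_mkcond sum1_count -size_filter.
apply: uniq_leq_size; first by rewrite filter_uniq.
by move=> x; rewrite mem_filter => /andP[].
Qed.

Section SumLaw.

Variables (R : realType) (G : zmodType) (A : {fset G}).
Hypothesis A_neq0 : A != fset0.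

Local Notation n := (#|` A|%:R : R).

Let n_gt0 : 0 < n. Proof. by rewrite ltr0n cardfs_gt0. Qed.

Let sum_const_A (k : R) : \sum_(a <- A) k = n * k.
Proof. by rewrite big_const_seq count_predT iter_addr_0 mulr_natl. Qed.

Lemma sum_law_ge0 x : 0 <= sum_law R A x.
Proof. by rewrite divr_ge0 ?exprn_ge0 ?sumr_ge0 // => a _; rewrite sumr_ge0. Qed.

Lemma sum_lawE (f : G -> R) :
  \sum_(x <- sumset A) f x * sum_law R A x =
  (\sum_(a <- A) \sum_(b <- A) f (a + b)) / n ^+ 2.
Proof.
rewrite /sum_law; under eq_bigr do rewrite mulrA.
rewrite -mulr_suml; congr (_ / _); under eq_bigr do rewrite mulr_sumr.
rewrite exchange_big; apply: eq_big_seq => a aA.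
under eq_bigr do rewrite mulr_sumr.
rewrite exchange_big; apply: eq_big_seq => b bA.
have abS : a + b \in sumset A by apply/imfset2P; exists a => //; exists b.
rewrite (bigD1_seq _ abS) ?fset_uniq //= eqxx mulr1 big1 ?addr0 // => x.
by rewrite eq_sym => /negbTE ->; rewrite mulr0.
Qed.

Lemma sum_law_sum1 : \sum_(x <- sumset A) sum_law R A x = 1.
Proof.
have := sum_lawE (fun=> 1); under eq_bigr do rewrite mul1r.
by move=> ->; rewrite !sum_const_A mulr1 -expr2 divff // gt_eqF ?exprn_gt0.
Qed.

Lemma sum_law_ge x : x \in sumset A -> (n ^+ 2)^-1 <= sum_law R A x.
Proof.
case/imfset2P => a aA [b bA ->].
rewrite /sum_law -[X in X <= _]mul1r ler_pM2r ?invr_gt0 ?exprn_gt0 //.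
rewrite (bigD1_seq a) //= (bigD1_seq b) //= eqxx -addrA lerDl.
by rewrite addr_ge0 ?sumr_ge0 // => i _; rewrite sumr_ge0.
Qed.

Lemma sum_law_mass_notin (U : {fset G}) :
  \sum_(x <- sumset A) (x \notin U)%:R * sum_law R A x =
  1 - (\sum_(a <- A) \sum_(b <- A) (a + b \in U)%:R) / n ^+ 2.
Proof.
rewrite sum_lawE -[X in _ = X - _](@divff _ (n ^+ 2)) ?gt_eqF ?exprn_gt0 // -mulrBl.
congr (_ / _).
rewrite expr2 -[n * n]sum_const_A -sumrB; apply: eq_bigr => a _.
rewrite -[n]mulr1 -sum_const_A -sumrB; apply: eq_bigr => b _.
by case: (_ \in U); rewrite ?subrr ?subr0.
Qed.

Lemma H_UA_card : H_UA R A = ln n.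
Proof.
rewrite /H_UA /entropy big_mkcond /= big_seq.
under eq_bigr => x xA do rewrite /unif_law xA invr_gt0 n_gt0.
rewrite -big_seq sum_const_A mulrA divff ?gt_eqF // mul1r lnV ?posrE ?opprK //.
Qed.

Section Weights.

Variables (eps : R) (U : {fset G}).
Hypotheses (eps_gt0 : 0 < eps) (cardU : #|` U| = #|` A|).

Definition weight x : R := if x \in U then n^-1 else eps / n ^+ 2.

Lemma weight_gt0 x : 0 < weight x.
Proof. by rewrite /weight; case: ifP; rewrite ?invr_gt0 ?divr_gt0 ?exprn_gt0. Qed.

Lemma sum_weight_le : \sum_(x <- sumset A) weight x <= 1 + eps.
Proof.
apply: (@le_trans _ _ (\sum_(x <- sumset A) ((x \in U)%:R / n + eps * sum_law R A x))).
  rewrite !big_seq; apply: ler_sum => x xS; rewrite /weight; case: ifP => _ /=.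
    by rewrite mul1r lerDl mulr_ge0 ?sum_law_ge0 ?ltW.
  by rewrite mul0r add0r ler_pM2l // sum_law_ge.
rewrite big_split /= -mulr_suml -mulr_sumr sum_law_sum1 mulr1 lerD2r.
by rewrite ler_pdivrMr // mul1r -cardU sum_mem_le_card.
Qed.

Lemma cross_entropy_weight x :
  - (sum_law R A x * ln (weight x)) =
  ln n * sum_law R A x + ln (eps^-1 * n) * ((x \notin U)%:R * sum_law R A x).
Proof.
rewrite /weight; case: (x \in U) => /=; first by rewrite lnV ?posrE //; ring.
rewrite ln_div ?posrE ?exprn_gt0 // lnXn // lnM ?posrE ?invr_gt0 // lnV ?posrE //.
rewrite mulr2n; ring.
Qed.

End Weights.

Lemma DeltaH_le_approx (eps : R) : 0 < eps <= 1 -> distr_approx_group eps A ->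
  DeltaH R A <= eps * ln (eps^-1 * n) + eps.
Proof.
case/andP=> eps_gt0 eps_le1 [U [cardU pairsU]].
set M := ln (eps^-1 * n); pose d := \sum_(x <- sumset A) (x \notin U)%:R * sum_law R A x.
have d_le : d <= eps by rewrite /d sum_law_mass_notin; lra.
have M_ge0 : 0 <= M.
  apply: ln_ge0; rewrite -[X in X <= _](mulVf (lt0r_neq0 eps_gt0)) ler_pM2l ?invr_gt0 //.
  by rewrite (le_trans eps_le1) // ler1n cardfs_gt0.
have cross : \sum_(x <- sumset A) - (sum_law R A x * ln (weight eps U x)) = ln n + M * d.
  under eq_bigr do rewrite (cross_entropy_weight U eps_gt0).
  by rewrite big_split /= -!mulr_sumr sum_law_sum1 mulr1.
have := gibbs_le (S := sumset A) (fun x _ => sum_law_ge0 x) (fun x _ => weight_gt0 U eps_gt0 x).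
rewrite !big_split /= cross sumrN sum_law_sum1.
have := sum_weight_le eps_gt0 cardU; have := ler_wpM2l M_ge0 d_le.
rewrite /DeltaH H_UA_card /H_UAplusUA /entropy; lra.
Qed.

End SumLaw.

Theorem mainTheorem2 (R : realType) (G : zmodType) (eps : R) (A : {fset G}) :
  0 < eps -> eps < expR (-2) ->
  A != fset0 ->
  distr_approx_group eps A ->
  DeltaH R A <= 2 * eps * ln (eps^-1 * #|` A|%:R).
Proof.
move=> eps_gt0 eps_lt A_neq0 approxA.
have eps_in : 0 < eps <= 1 by rewrite eps_gt0 ltW // (lt_trans eps_lt) // expR_lt1; lra.
have n_ge1 : 1 <= #|` A|%:R :> R by rewrite ler1n cardfs_gt0.
have M_ge1 : 1 <= ln (eps^-1 * #|` A|%:R).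
  have ln_eps : ln eps < -2 by rewrite -[X in _ < X]expRK ltr_ln ?posrE ?expR_gt0.
  rewrite lnM ?posrE ?invr_gt0 ?(lt_le_trans ltr01 n_ge1) // lnV ?posrE //.
  have := ln_ge0 n_ge1; lra.
have := DeltaH_le_approx A_neq0 eps_in approxA.
have := ler_wpM2l (ltW eps_gt0) M_ge1; rewrite mulr1; lra.
Qed.
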